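(* The set $\{A/B : A, B \in \mathtt{PAL}\}$ is dense in the positive real numbers $\mathbb{R}^{+}$.
   Context: For an integer $n\ge 1$, $(n)_2$ denotes its binary representation, with most significant digit first and no leading zeros. A positive integer $n$ is palindromic if $(n)_2$ reads the same forwards and backwards; $\mathtt{PAL}=\{1,3,5,7,9,15,17,\dots\}$ denotes the set of palindromic numbers. *)

From Stdlib Require Import Reals Lra Lia Arith List.
Import ListNotations.

(* Binary digits of n, least significant first; no leading zeros (bits 0 = []).
   Fuel-based to make termination structural; fuel n suffices since n/2 < n. *)
Fixpoint bits_aux (fuel n : nat) : list bool :=
  match fuel with
  | O => []
  | S f => match n with
           | O => []
           | _ => Nat.odd n :: bits_aux f (Nat.div2 n)
           end
  end.

Definition bits (n : nat) : list bool := bits_aux n n.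

Definition binary_rep (n : nat) : list bool := rev (bits n).

Definition palindromic (n : nat) : Prop :=
  1 <= n /\ binary_rep n = rev (binary_rep n).

Example bits_sanity : binary_rep 6 = [true; true; false] /\ binary_rep 9 = [true; false; false; true].
Proof. split; reflexivity. Qed.

(* Dyadic rationals n / 2^m are dense in the positive reals, so it suffices to
   approximate them.  Let w be the binary expansion of n, of length L, and let
   r be the value of its reversal.  The digit string rev w 0^k w is a palindrome
   of value r + 2^(L+k) n, and 2^(L+k+m) + 1 is a palindrome; since r, n < 2^L
   their quotient is within 2^-k of n / 2^m. *)

From Stdlib Require Import Reals Lra Lia List ZArith.
Import ListNotations.

Fixpoint of_bits (l : list bool) : nat :=
  match l with
  | [] => 0
  | b :: l' => Nat.b2n b + 2 * of_bits l'
  end.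

(* No trailing zero; the default [true] makes the empty list canonical. *)
Definition canonical (l : list bool) : Prop := last l true = true.

Lemma of_bits_app l1 l2 :
  of_bits (l1 ++ l2) = of_bits l1 + 2 ^ length l1 * of_bits l2.
Proof. induction l1 as [|b l1 IH]; simpl; [lia|]. rewrite IH. lia. Qed.

Lemma of_bits_lt l : of_bits l < 2 ^ length l.
Proof. induction l as [|[|] l IH]; simpl; lia. Qed.

Lemma of_bits_repeat_false n : of_bits (repeat false n) = 0.
Proof. induction n; simpl; lia. Qed.

Lemma canonical_cons b l : canonical (b :: l) -> canonical l.
Proof. now destruct l. Qed.

Lemma canonical_app l1 l2 : l2 <> [] -> canonical l2 -> canonical (l1 ++ l2).
Proof.
  intros Hne Hc. induction l1 as [|b l1 IH]; [exact Hc|].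
  unfold canonical. simpl. destruct (l1 ++ l2) eqn:E; [|exact IH].
  now apply app_eq_nil in E as [_ ->].
Qed.

Lemma of_bits_pos l : l <> [] -> canonical l -> 0 < of_bits l.
Proof.
  induction l as [|b l IH]; intros Hne Hc; [congruence|].
  destruct l as [|c l].
  - unfold canonical in Hc. simpl in Hc. subst. simpl. lia.
  - assert (0 < of_bits (c :: l)) by (apply IH; [discriminate|exact Hc]).
    simpl in *. lia.
Qed.

Lemma odd_b2n_double b n : Nat.odd (Nat.b2n b + 2 * n) = b.
Proof. rewrite Nat.odd_add_mul_2. now destruct b. Qed.

Lemma div2_b2n_double b n : Nat.div2 (Nat.b2n b + 2 * n) = n.
Proof.
  destruct b; simpl Nat.b2n;
    [rewrite Nat.add_1_l, Nat.div2_succ_double | rewrite Nat.add_0_l, Nat.div2_double];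
    reflexivity.
Qed.

Lemma bits_aux_of_bits l f : canonical l -> of_bits l <= f -> bits_aux f (of_bits l) = l.
Proof.
  revert f. induction l as [|b l IH]; intros f Hc Hf; [now destruct f|].
  pose proof (of_bits_pos (b :: l) ltac:(discriminate) Hc) as Hpos.
  destruct f as [|f]; [lia|].
  cbn [bits_aux]. destruct (of_bits (b :: l)) as [|n] eqn:E; [lia|].
  rewrite <- E. cbn [of_bits] in *.
  rewrite odd_b2n_double, div2_b2n_double, IH; [reflexivity | exact (canonical_cons b l Hc) | lia].
Qed.

Lemma bits_of_bits l : canonical l -> bits (of_bits l) = l.
Proof. intros Hc. now apply bits_aux_of_bits. Qed.

Lemma of_bits_bits_aux f n : n <= f -> of_bits (bits_aux f n) = n.
Proof.
  revert n. induction f as [|f IH]; intros n Hn; [simpl; lia|].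
  destruct n as [|n']; [reflexivity|].
  cbn [bits_aux of_bits]. set (n := S n') in *.
  pose proof (Nat.div2_odd n) as Hdiv.
  rewrite IH; lia.
Qed.

Lemma canonical_bits_aux f n : n <= f -> canonical (bits_aux f n).
Proof.
  revert n. induction f as [|f IH]; intros n Hn; [reflexivity|].
  destruct n as [|n']; [reflexivity|].
  cbn [bits_aux]. set (n := S n') in *.
  pose proof (Nat.div2_odd n) as Hdiv.
  assert (Hf : Nat.div2 n <= f) by lia.
  destruct (bits_aux f (Nat.div2 n)) as [|c l] eqn:E.
  - apply (f_equal of_bits) in E. rewrite of_bits_bits_aux in E by exact Hf.
    rewrite E in Hdiv. unfold canonical. simpl.
    destruct (Nat.odd n); simpl in Hdiv; [reflexivity | lia].
  - pose proof (IH _ Hf) as Hc. rewrite E in Hc. exact Hc.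
Qed.

Lemma of_bits_bits n : of_bits (bits n) = n.
Proof. now apply of_bits_bits_aux. Qed.

Lemma canonical_bits n : canonical (bits n).
Proof. now apply canonical_bits_aux. Qed.

Lemma palindromic_of_bits l :
  l <> [] -> canonical l -> rev l = l -> palindromic (of_bits l).
Proof.
  intros Hne Hc Hrev. split.
  - pose proof (of_bits_pos l Hne Hc). lia.
  - unfold binary_rep. rewrite rev_involutive, bits_of_bits by exact Hc.
    now rewrite Hrev.
Qed.

Lemma palindromic_pow2_add1 n : 0 < n -> palindromic (2 ^ n + 1).
Proof.
  intros Hn. destruct n as [|j]; [lia|].
  set (l := true :: repeat false j ++ [true]).
  replace (2 ^ S j + 1) with (of_bits l).
  - apply palindromic_of_bits.
    + discriminate.
    + unfold canonical, l. rewrite app_comm_cons. apply last_last.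
    + unfold l. simpl. now rewrite rev_app_distr, rev_repeat.
  - unfold l. simpl of_bits. rewrite of_bits_app, of_bits_repeat_false, repeat_length.
    simpl. lia.
Qed.

Lemma palindromic_mirror n k :
  0 < n -> exists r L, r < 2 ^ L /\ n < 2 ^ L /\ palindromic (2 ^ L * 2 ^ k * n + r).
Proof.
  intros Hn. set (w := bits n).
  assert (Hne : w <> []).
  { intro E. pose proof (of_bits_bits n) as Hw. fold w in Hw. rewrite E in Hw. simpl in Hw. lia. }
  set (l := rev w ++ repeat false k ++ w).
  exists (of_bits (rev w)), (length w). split; [|split].
  - rewrite <- length_rev. apply of_bits_lt.
  - rewrite <- (of_bits_bits n) at 1. apply of_bits_lt.
  - replace (2 ^ length w * 2 ^ k * n + of_bits (rev w)) with (of_bits l).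
    + apply palindromic_of_bits.
      * intro E. apply app_eq_nil in E as [_ E]. apply app_eq_nil in E as [_ E]. exact (Hne E).
      * unfold l. rewrite app_assoc. apply canonical_app; [exact Hne | apply canonical_bits].
      * unfold l. now rewrite !rev_app_distr, rev_involutive, rev_repeat, app_assoc.
    + unfold l. rewrite !of_bits_app, of_bits_repeat_false, length_rev, repeat_length.
      unfold w. rewrite of_bits_bits. lia.
Qed.

Open Scope R_scope.

Lemma ratio_estimate (P K M N R : R) :
  0 < P -> 1 <= K -> 1 <= M -> 0 <= R < P -> 0 <= N < P ->
  Rabs ((P * K * N + R) / (P * K * M + 1) - N / M) < / K.
Proof.
  intros HP HK HM HR HN.
  (* The error is (M R - N) / D with |M R - N| < M P and D > K M P. *)
  set (D := M * (P * K * M + 1)).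
  assert (HKP : P <= K * P) by nra.
  assert (HKPM : K * P <= K * P * M) by nra.
  assert (HD : K * P * M < D).
  { assert (K * P * M <= K * P * M * M) by nra. unfold D. nra. }
  assert (Hnum : K * Rabs (M * R - N) < D).
  { rewrite <- (Rabs_right K), <- Rabs_mult by lra. apply Rabs_def1; nra. }
  replace ((P * K * N + R) / (P * K * M + 1) - N / M) with ((M * R - N) * / D)
    by (unfold D; field; nra).
  rewrite Rabs_mult, Rabs_inv, (Rabs_right D) by lra.
  apply (Rmult_lt_reg_l (K * D)); [nra|].
  replace (K * D * (Rabs (M * R - N) * / D)) with (K * Rabs (M * R - N)) by (field; lra).
  replace (K * D * / K) with D by (field; lra).
  exact Hnum.
Qed.

Lemma INR_pow2 n : INR (2 ^ n) = 2 ^ n.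
Proof. rewrite pow_INR. reflexivity. Qed.

Lemma palindromic_ratio_near_dyadic (n m k : nat) :
  (0 < n)%nat -> exists A B, palindromic A /\ palindromic B /\
    Rabs (INR A / INR B - INR n / 2 ^ m) < / 2 ^ k.
Proof.
  intros Hn. destruct (palindromic_mirror n k Hn) as (r & L & Hr & HnL & HA).
  assert (HL : (0 < L)%nat) by (destruct L; simpl in HnL; lia).
  exists (2 ^ L * 2 ^ k * n + r)%nat, (2 ^ (L + k + m) + 1)%nat.
  split; [exact HA|split; [apply palindromic_pow2_add1; lia|]].
  rewrite !plus_INR, !mult_INR, !INR_pow2, !pow_add. change (INR 1) with 1.
  apply lt_INR in Hr, HnL. rewrite INR_pow2 in Hr, HnL.
  pose proof (pos_INR r). pose proof (pos_INR n).
  apply ratio_estimate; [apply pow_lt | apply pow_R1_Rle .. | split | split]; lra.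
Qed.

Lemma exists_inv_pow2_lt e : 0 < e -> exists k, / 2 ^ k < e.
Proof.
  intros He. destruct (pow_lt_1_zero (/ 2) ltac:(rewrite Rabs_right; lra) e He) as [k Hk].
  exists k. specialize (Hk k (le_n k)).
  rewrite pow_inv, Rabs_right in Hk; [exact Hk|].
  left. apply Rinv_0_lt_compat, pow_lt. lra.
Qed.

Lemma dyadic_between x y :
  0 < x -> x < y -> exists n m, (0 < n)%nat /\ x < INR n / 2 ^ m < y.
Proof.
  intros Hx Hxy. destruct (exists_inv_pow2_lt (y - x)) as [m Hm]; [lra|].
  assert (H2m : 0 < 2 ^ m) by (apply pow_lt; lra).
  destruct (archimed (x * 2 ^ m)) as [Hup1 Hup2].
  assert (Hup : (0 < up (x * 2 ^ m))%Z) by (apply lt_0_IZR; nra).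
  exists (Z.to_nat (up (x * 2 ^ m))), m.
  rewrite INR_IZR_INZ, Z2Nat.id by lia.
  split; [lia|split].
  - apply (Rmult_lt_reg_r (2 ^ m)); [exact H2m|]. field_simplify; lra.
  - replace (IZR (up (x * 2 ^ m)) / 2 ^ m)
      with (x + (IZR (up (x * 2 ^ m)) - x * 2 ^ m) * / 2 ^ m) by (field; lra).
    assert ((IZR (up (x * 2 ^ m)) - x * 2 ^ m) * / 2 ^ m <= / 2 ^ m).
    { rewrite <- (Rmult_1_l (/ 2 ^ m)) at 2.
      apply Rmult_le_compat_r; [left; apply Rinv_0_lt_compat|]; lra. }
    lra.
Qed.

Theorem theorem2 :
  forall x y : R, 0 < x -> x < y ->
    exists A B : nat, palindromic A /\ palindromic B /\
      x < INR A / INR B < y.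
Proof.
  intros x y Hx Hxy.
  destruct (dyadic_between x y Hx Hxy) as (n & m & Hn & Hxq & Hqy).
  set (q := INR n / 2 ^ m) in *.
  destruct (exists_inv_pow2_lt (Rmin (q - x) (y - q))) as [k Hk].
  { apply Rmin_glb_lt; lra. }
  destruct (palindromic_ratio_near_dyadic n m k Hn) as (A & B & HA & HB & Hclose).
  exists A, B. split; [exact HA|split; [exact HB|]].
  apply Rabs_def2 in Hclose. pose proof (Rmin_l (q - x) (y - q)).
  pose proof (Rmin_r (q - x) (y - q)). fold q in Hclose. lra.
Qed.
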